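(* Let $p$ be a prime and let $\Lambda$ be a finite, simple, connected graph with at least $3$ vertices such that $|\mathrm{V}(\Lambda)|$ and $|\mathrm{E}(\Lambda)|$ are both powers of $p$. Let $G\le\mathrm{Aut}(\Lambda)$ be transitive on both $\mathrm{V}(\Lambda)$ and $\mathrm{E}(\Lambda)$. Then $G$ contains an element which acts semiregularly on each of $\mathrm{V}(\Lambda)$ and $\mathrm{E}(\Lambda)$.
   Context: A non-identity element $g$ acts semiregularly on a set if the cyclic group $\langle g\rangle$ acts on it with all point stabilisers trivial. *)

From mathcomp Require Import all_boot all_order all_fingroup.
Set Implicit Arguments. Unset Strict Implicit. Unset Printing Implicit Defensive.
Local Open Scope group_scope.

Definition simple_graph (V : finType) (e : rel V) : Prop :=
  symmetric e /\ irreflexive e.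

Definition connected_graph (V : finType) (e : rel V) : Prop :=
  forall x y : V, connect e x y.

Definition edges (V : finType) (e : rel V) : {set {set V}} :=
  [set A : {set V} | [exists x, exists y, e x y && (A == [set x; y])]].

Definition is_graph_aut (V : finType) (e : rel V) (g : {perm V}) : bool :=
  [forall x, forall y, e (g x) (g y) == e x y].

Definition is_power_of (p n : nat) : Prop := exists k, n = (p ^ k)%N.

Definition semiregular_elt (aT : finGroupType) (D : {group aT}) (T : finType)
  (to : action D T) (g : aT) (S : {set T}) : Prop :=
  g != 1 /\ forall x, x \in S -> 'C_<[g]>[x | to] = 1.

From mathcomp Require Import all_boot all_order all_fingroup all_solvable.
Set Implicit Arguments. Unset Strict Implicit. Unset Printing Implicit Defensive.
Local Open Scope group_scope.

(* Let P be a Sylow p-subgroup of G. As |V| and |E| are powers of p, comparing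
   |P : P_x| with |G : G_x| = |S| shows that P is still transitive on V and on
   E, and P is nontrivial, so its centre contains an element z of order p.  A
   central element of a transitive group fixing one point fixes all of them;
   hence z fixes no vertex (as z <> 1) and no edge (otherwise z would swap the
   ends of every edge, confining the connected graph to {x, z x}).  An element
   of prime order without fixed points acts semiregularly. *)

Section TransitiveActions.
Variables (aT : finGroupType) (rT : finType) (to : {action aT &-> rT}).

Lemma Sylow_atrans p (G P : {group aT}) (S : {set rT}) :
  [transitive G, on S | to] -> p.-Sylow(G) P -> p.-nat #|S| ->
  [transitive P, on S | to].
Proof.
move=> trG sylP pS; have sPG := pHall_sub sylP.
have [x Sx _] := imsetP trG.
apply/imsetP; exists x => //; apply/eqP; rewrite eq_sym eqEcard.
rewrite acts_sub_orbit ?Sx ?(subset_trans sPG (atrans_acts trG)) //=.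
set Gx := 'C_G[x | to]; set Px := 'C_P[x | to].
have oG : #|G| = (#|S| * #|Gx|)%N.
  by rewrite -(card_orbit_stab to G x) (atransP trG _ Sx).
have oP : #|P| = (#|S| * #|Gx|`_p)%N.
  have S_gt0 : 0 < #|S| by apply/card_gt0P; exists x.
  by rewrite (card_Hall sylP) oG partnM ?cardG_gt0 // part_pnat_id.
have leP : #|Px| <= #|Gx|`_p.
  apply: dvdn_leq; first exact: part_gt0.
  rewrite -(part_pnat_id (pgroupS (subsetIl P _) (pHall_pgroup sylP))).
  by apply: partn_dvd; rewrite ?cardG_gt0 ?cardSg ?setSI.
rewrite -(@leq_pmul2r #|Gx|`_p) ?part_gt0 // -oP -(card_orbit_stab to P x).
by rewrite leq_mul2l leP orbT.
Qed.

Lemma atrans_center_fix (P : {group aT}) (S : {set rT}) z x :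
  [transitive P, on S | to] -> z \in 'Z(P) -> x \in S -> to x z = x ->
  z \in 'C(S | to).
Proof.
move=> trP /centerP[Pz cPz] Sx zx; apply/astabP => y Sy.
have [h Ph ->] := atransP2 trP Sx Sy.
by rewrite -actM -(cPz h Ph) actM zx.
Qed.

Lemma astab1_cycle_prime z x :
  prime #[z] -> to x z != x -> 'C_<[z]>[x | to] = 1.
Proof.
move=> pr_z zx.
have [sZC | tiZC] := prime_subgroupVti 'C[x | to] pr_z.
  by move/astab1P: (subsetP sZC z (cycle_id z)) zx => ->; rewrite eqxx.
by rewrite -[RHS]tiZC setIC.
Qed.

End TransitiveActions.

Lemma center_elt_of_order (gT : finGroupType) p (P : {group gT}) :
  prime p -> p.-group P -> P :!=: 1 -> {z | z \in 'Z(P) & #[z] = p}.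
Proof.
move=> pr_p pP ntP.
have ntZ : 'Z(P) != 1 by apply: contra ntP => /eqP/(trivg_center_pgroup pP)->.
have [_ pZ _] := pgroup_pdiv (pgroupS (center_sub P) pP) ntZ.
exact: Cauchy.
Qed.

Lemma pnat_power_of p n : prime p -> is_power_of p n -> p.-nat n.
Proof. by move=> pr_p [k ->]; rewrite pnatX pnat_id. Qed.

Lemma imset2_fixed_swap (T : finType) (f : T -> T) x y :
  f @: [set x; y] = [set x; y] -> f x != x -> f x = y.
Proof.
move=> fxy nfx; have : f x \in [set x; y] by rewrite -fxy imset_f ?set21.
by rewrite !inE (negbTE nfx) => /eqP.
Qed.

Section Graphs.
Variables (T : finType) (e : rel T).

Lemma mem_edges x y : e x y -> [set x; y] \in edges e.
Proof.
by move=> exy; rewrite inE; apply/existsP; exists x; apply/existsP; exists y;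
  rewrite exy eqxx.
Qed.

Lemma connected_swap_card_le2 (f : T -> T) :
  symmetric e -> connected_graph e -> injective f ->
  (forall x y, e x y -> f x = y) -> #|T| <= 2.
Proof.
move=> esym conn f_inj fe.
case: (pickP (@predT T)) => [x0 _ | T0]; last by rewrite eq_card0.
set B := [set x0; f x0].
have closedB_step u w : e u w -> u \in B -> w \in B.
  move=> euw; rewrite !inE => /orP[/eqP ux0 | /eqP ufx0].
    by rewrite -ux0 (fe _ _ euw) eqxx orbT.
  have fw : f w = f x0 by rewrite -ufx0 (fe w u) // esym.
  by rewrite (f_inj _ _ fw) eqxx.
have closedB : closed e (mem B).
  by move=> u w euw; apply/idP/idP; apply: closedB_step; rewrite // esym.
apply: leq_trans (_ : #|B| <= 2); last by rewrite cards2; case: (_ != _).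
apply/subset_leq_card/subsetP => y _.
by rewrite -(closed_connect closedB (conn x0 y)) set21.
Qed.

End Graphs.

Theorem corollary2p13 (p : nat) (V : finType) (e : rel V) (G : {group {perm V}}) :
  prime p ->
  simple_graph e ->
  connected_graph e ->
  3 <= #|V| ->
  is_power_of p #|V| ->
  is_power_of p #|edges e| ->
  (forall g, g \in G -> is_graph_aut e g) ->
  [transitive G, on [set: V] | 'P] ->
  [transitive G, on edges e | 'P^*] ->
  exists2 g, g \in G &
    semiregular_elt 'P g [set: V] /\ semiregular_elt 'P^* g (edges e).
Proof.
move=> pr_p [esym _] conn V3 oV oE _ trV trE.
have [P sylP] := Sylow_exists p G.
have trPV : [transitive P, on [set: V] | 'P].
  by apply: Sylow_atrans trV sylP _; rewrite cardsT (pnat_power_of pr_p oV).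
have trPE := Sylow_atrans trE sylP (pnat_power_of pr_p oE).
have ntP : P :!=: 1.
  apply: contraTneq V3 => P1; have := atrans_dvd trPV.
  by rewrite cardsT P1 cards1 dvdn1 => /eqP->.
have [z Zz oz] := center_elt_of_order pr_p (pHall_pgroup sylP) ntP.
have pr_z : prime #[z] by rewrite oz.
have nt_z : z != 1 by rewrite -order_eq1 oz gtn_eqF ?prime_gt1.
have fpfV v : aperm v z != v.
  apply: contra nt_z => /eqP zv; apply/eqP/permP => y.
  have /astabP zfix := atrans_center_fix trPV Zz (in_setT v) zv.
  by rewrite perm1 -apermE zfix.
have fpfE A : A \in edges e -> 'P^*%act A z != A.
  move=> EA; apply/negP => /eqP zA.
  suff : #|V| <= 2 by rewrite leqNgt V3.
  have /astabP zE := atrans_center_fix trPE Zz EA zA.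
  apply: (connected_swap_card_le2 esym conn (@perm_inj _ z)) => x y exy.
  exact: imset2_fixed_swap (zE _ (mem_edges exy)) (fpfV x).
exists z; first exact: subsetP (pHall_sub sylP) z (subsetP (center_sub P) z Zz).
split; split=> // A EA; apply: astab1_cycle_prime pr_z _; first exact: fpfV.
exact: fpfE.
Qed.
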